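(* Let $G$ be a non-cyclic group containing elements of order $n$. Suppose that $\mathcal{M}(G)$ is $n$-locally simply connected and that $G$ admits an $n$-regular 2-transitive cover. Then $|\mathcal{M}(G)|$, and hence $|\mathcal{C}(G)|$, is simply connected.
   Context: For a group $G$, $\mathcal{C}(G)$ is the poset of left cosets of proper subgroups of $G$ (including the trivial subgroup) ordered by inclusion, and $|\mathcal{C}(G)|$ the realization of its order complex. $\mathcal{M}(G)$ is the simplicial complex with vertex set $G$ whose simplices are the finite nonempty subsets of $G$ contained in some proper left coset; $|\mathcal{M}(G)|\simeq|\mathcal{C}(G)|$. For non-cyclic $G$, every $\{1,g\}$ is an edge; the standard presentation of $\pi_1(\mathcal{M}(G))$ has a generator $(u,v)$ for each ordered pair with $\{u,v\}$ an edge, and relations $(u,v)=1$ if $1\in\{u,v\}$, $(u,v)(v,u)=1$ for every edge, and $(u,v)(v,w)(w,u)=1$ for every 2-simplex $\{u,v,w\}$. $\mathcal{M}(G)$ is $n$-locally simply connected if every generator $(g,h)$ of this presentation with $g$ of order $n$ is trivial in $\pi_1(\mathcal{M}(G))$. A set $S$ of proper nontrivial subgroups of $G$ is a cover if every element of $G$ lies in some $H\in S$; it is 2-transitive if for each $H\in S$ the action of $G$ on the left cosets $G/H$ is 2-transitive; it is $n$-regular if for each $H\in S$ there is $g\in G$ of order $n$ acting nontrivially on $G/H$. *)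

From Stdlib Require Import List ZArith Relations.
Import ListNotations.

Record group := Group {
  carrier :> Type;
  gmul : carrier -> carrier -> carrier;
  ginv : carrier -> carrier;
  gone : carrier;
  gmulA : forall x y z, gmul x (gmul y z) = gmul (gmul x y) z;
  gmul1l : forall x, gmul gone x = x;
  gmul1r : forall x, gmul x gone = x;
  gmulVl : forall x, gmul (ginv x) x = gone;
  gmulVr : forall x, gmul x (ginv x) = gone
}.

Arguments gmul {g}.
Arguments ginv {g}.
Arguments gone {g}.

Section Defs.
Variable G : group.

Fixpoint gpow (g : G) (k : nat) : G :=
  match k with O => gone | S k => gmul g (gpow g k) end.

Definition gzpow (g : G) (k : Z) : G :=
  match k with
  | Z0 => gone
  | Zpos p => gpow g (Pos.to_nat p)
  | Zneg p => ginv (gpow g (Pos.to_nat p))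
  end.

Definition cyclic : Prop := exists g : G, forall x : G, exists k : Z, x = gzpow g k.

Definition has_order (g : G) (n : nat) : Prop :=
  0 < n /\ gpow g n = gone /\ forall m, 0 < m < n -> gpow g m <> gone.

Definition subgroup (H : G -> Prop) : Prop :=
  H gone /\ (forall x y, H x -> H y -> H (gmul x y)) /\ (forall x, H x -> H (ginv x)).

Definition proper (H : G -> Prop) : Prop := exists g, ~ H g.
Definition nontrivial (H : G -> Prop) : Prop := exists h, H h /\ h <> gone.

Definition in_lcoset (x : G) (H : G -> Prop) (y : G) : Prop := H (gmul (ginv x) y).

Definition Medge (u v : G) : Prop :=
  u <> v /\ exists H x, subgroup H /\ proper H /\ in_lcoset x H u /\ in_lcoset x H v.

Definition Mtriangle (u v w : G) : Prop :=
  u <> v /\ v <> w /\ u <> w /\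
  exists H x, subgroup H /\ proper H /\
    in_lcoset x H u /\ in_lcoset x H v /\ in_lcoset x H w.

(* Standard presentation of pi_1(M(G)): generators are ordered pairs (u,v);
   a letter is a generator with an exponent sign (true = +1, false = -1). *)
Definition letter : Type := ((G * G) * bool)%type.
Definition word : Type := list letter.

Inductive relator : word -> Prop :=
| rel_base u v : Medge u v -> (u = gone \/ v = gone) -> relator [((u, v), true)]
| rel_inv u v : Medge u v -> relator [((u, v), true); ((v, u), true)]
| rel_tri u v w : Mtriangle u v w ->
    relator [((u, v), true); ((v, w), true); ((w, u), true)].

Inductive wstep : word -> word -> Prop :=
| wstep_rel a r b : relator r -> wstep (a ++ r ++ b) (a ++ b)
| wstep_free a p s b : wstep (a ++ [(p, s); (p, negb s)] ++ b) (a ++ b).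

Definition wequiv : word -> word -> Prop := clos_refl_sym_trans word wstep.

Definition gen_trivial (u v : G) : Prop := wequiv [((u, v), true)] [].

Definition n_locally_simply_connected (n : nat) : Prop :=
  forall g h : G, Medge g h -> has_order g n -> gen_trivial g h.

(* |M(G)| simply connected: connected 1-skeleton and trivial pi_1
   (every generator of the standard presentation is trivial) *)
Definition M_simply_connected : Prop :=
  (forall u v : G, clos_refl_trans G Medge u v) /\
  (forall u v : G, Medge u v -> gen_trivial u v).

Definition cover (S : (G -> Prop) -> Prop) : Prop :=
  (forall H, S H -> subgroup H /\ proper H /\ nontrivial H) /\
  (forall g : G, exists H, S H /\ H g).

(* G acts 2-transitively on G/H by left multiplication; cosets xH = yH iff x^-1 y in H *)
Definition two_transitive_on (H : G -> Prop) : Prop :=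
  forall x1 y1 x2 y2 : G,
    ~ H (gmul (ginv x1) y1) -> ~ H (gmul (ginv x2) y2) ->
    exists g : G, H (gmul (ginv (gmul g x1)) x2) /\ H (gmul (ginv (gmul g y1)) y2).

Definition two_transitive (S : (G -> Prop) -> Prop) : Prop :=
  forall H, S H -> two_transitive_on H.

Definition n_regular (n : nat) (S : (G -> Prop) -> Prop) : Prop :=
  forall H, S H -> exists g : G, has_order g n /\
    exists x : G, ~ H (gmul (ginv (gmul g x)) x).

End Defs.

(* Every coset uH of a subgroup H of the cover contains a "hub": a vertex all
   of whose edges are trivial generators.  If uH = H the hub is 1, by the base
   relations.  Otherwise 2-transitivity carries a pair of distinct cosets
   (xH, gxH), with g of order n, onto (H, uH); this places a conjugate of g
   in uH, and its edges are trivial by n-local simple connectivity.  An edge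
   {u, v} lies in such a coset uH together with a hub c, so the triangle
   relation for {u, v, c} makes (u, v) trivial.  Connectivity holds because
   every element lies in a proper subgroup, hence is adjacent to 1. *)
From Stdlib Require Import List Relations Classical.
Import ListNotations.

Section Group.
Variable G : group.
Implicit Types (x y z a g u v : G) (H : G -> Prop).

Lemma mulKg x y : gmul (ginv x) (gmul x y) = y.
Proof. rewrite gmulA, gmulVl, gmul1l; reflexivity. Qed.

Lemma mulgK x y : gmul (gmul y x) (ginv x) = y.
Proof. rewrite <- gmulA, gmulVr, gmul1r; reflexivity. Qed.

Lemma mulgKV x y : gmul (gmul y (ginv x)) x = y.
Proof. rewrite <- gmulA, gmulVl, gmul1r; reflexivity. Qed.

Lemma invg_unique x y : gmul x y = gone -> ginv x = y.
Proof. intro E. rewrite <- (mulKg x y), E, gmul1r. reflexivity. Qed.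

Lemma invg1 : ginv (gone : G) = gone.
Proof. apply invg_unique, gmul1l. Qed.

Lemma invgK x : ginv (ginv x) = x.
Proof. apply invg_unique, gmulVl. Qed.

Lemma invMg x y : ginv (gmul x y) = gmul (ginv y) (ginv x).
Proof. apply invg_unique. rewrite !gmulA, mulgK, gmulVr. reflexivity. Qed.

Lemma gpow_conj a g m :
  gpow G (gmul (gmul a g) (ginv a)) m = gmul (gmul a (gpow G g m)) (ginv a).
Proof.
  induction m as [|m IHm]; simpl.
  - rewrite gmul1r, gmulVr; reflexivity.
  - rewrite IHm, !gmulA, mulgKV. reflexivity.
Qed.

Lemma has_order_conj a g n :
  has_order G g n -> has_order G (gmul (gmul a g) (ginv a)) n.
Proof.
  intros [n_pos [gn1 gm1]]. split; [exact n_pos | split].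
  - rewrite gpow_conj, gn1, gmul1r, gmulVr; reflexivity.
  - intros m Hm E. apply (gm1 m Hm).
    rewrite <- (mulKg a (gpow G g m)), <- (mulgKV a (gmul a (gpow G g m))).
    rewrite <- gpow_conj, E, gmul1l, gmulVl. reflexivity.
Qed.

Lemma subgroup_inv H x : subgroup G H -> H x -> H (ginv x).
Proof. intros [_ [_ HV]]. apply HV. Qed.

Lemma in_lcoset_refl H x : subgroup G H -> in_lcoset G x H x.
Proof. intros [H1 _]. unfold in_lcoset. rewrite gmulVl. exact H1. Qed.

Lemma in_lcoset_sym H x y :
  subgroup G H -> in_lcoset G x H y -> in_lcoset G y H x.
Proof.
  unfold in_lcoset. intros sH Hxy.
  rewrite <- (invgK x), <- invMg. apply subgroup_inv; assumption.
Qed.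

Lemma in_lcoset_trans H x y z :
  subgroup G H -> in_lcoset G x H y -> in_lcoset G y H z -> in_lcoset G x H z.
Proof.
  unfold in_lcoset. intros [_ [HM _]] Hxy Hyz.
  rewrite <- (mulgK y (ginv x)), <- gmulA. apply HM; assumption.
Qed.

Lemma Medge_sym u v : Medge G u v -> Medge G v u.
Proof.
  intros [uv [H [x [sH [pH [Hu Hv]]]]]].
  split; [congruence | exists H, x; auto].
Qed.

Lemma Medge_in_lcoset H x u v :
  subgroup G H -> proper G H -> in_lcoset G x H u -> in_lcoset G x H v ->
  u <> v -> Medge G u v.
Proof. intros. split; [assumption | exists H, x; auto]. Qed.

Lemma Medge_one S u : cover G S -> u <> gone -> Medge G gone u.
Proof.
  intros [S_sub S_cov] u1. destruct (S_cov u) as [H [SH Hu]].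
  destruct (S_sub H SH) as [sH [pH _]].
  apply (Medge_in_lcoset H gone); auto.
  - apply in_lcoset_refl; assumption.
  - unfold in_lcoset. rewrite invg1, gmul1l. exact Hu.
Qed.

Lemma lcoset_contains_conj H g x u :
  subgroup G H -> two_transitive_on G H ->
  ~ H (gmul (ginv (gmul g x)) x) -> ~ H u ->
  exists a, in_lcoset G u H (gmul (gmul a g) (ginv a)).
Proof.
  intros sH tH g_moves u_out.
  assert (xgx : ~ in_lcoset G x H (gmul g x)).
  { intro C. apply g_moves, in_lcoset_sym; assumption. }
  assert (one_u : ~ in_lcoset G gone H u).
  { unfold in_lcoset. rewrite invg1, gmul1l. exact u_out. }
  destruct (tH x (gmul g x) gone u xgx one_u) as [a [ax_one agx_u]].
  exists a.
  assert (conj_eq : gmul (gmul a (gmul g x)) (ginv (gmul a x))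
                    = gmul (gmul a g) (ginv a)).
  { rewrite invMg, !gmulA, mulgK. reflexivity. }
  rewrite <- conj_eq.
  apply (in_lcoset_trans H u (gmul a (gmul g x))); auto.
  - apply in_lcoset_sym; assumption.
  - unfold in_lcoset. rewrite mulKg.
    rewrite <- (gmul1r G (ginv (gmul a x))). exact ax_one.
Qed.

Lemma wstep_app c d w w' : wstep G w w' -> wstep G (c ++ w ++ d) (c ++ w' ++ d).
Proof.
  intros [a r b Hr | a p s b].
  - replace (c ++ (a ++ r ++ b) ++ d) with ((c ++ a) ++ r ++ (b ++ d))
      by (rewrite !app_assoc; reflexivity).
    replace (c ++ (a ++ b) ++ d) with ((c ++ a) ++ (b ++ d))
      by (rewrite !app_assoc; reflexivity).
    constructor; assumption.
  - pose proof (wstep_free G (c ++ a) p s (b ++ d)) as W.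
    rewrite <- !app_assoc in W. rewrite <- !app_assoc. exact W.
Qed.

Lemma wequiv_app c d w w' : wequiv G w w' -> wequiv G (c ++ w ++ d) (c ++ w' ++ d).
Proof.
  induction 1.
  - apply rst_step, wstep_app; assumption.
  - apply rst_refl.
  - apply rst_sym; assumption.
  - eapply rst_trans; eassumption.
Qed.

Lemma relator_wequiv_nil r : relator G r -> wequiv G r [].
Proof.
  intro Hr. apply rst_step.
  pose proof (wstep_rel G [] r [] Hr) as W. rewrite app_nil_r in W. exact W.
Qed.

Lemma gen_trivial_sym u v :
  Medge G u v -> gen_trivial G u v -> gen_trivial G v u.
Proof.
  intros uv Tuv. unfold gen_trivial in *.
  eapply rst_trans.
  - exact (wequiv_app [] [((v, u), true)] _ _ (rst_sym _ _ _ _ Tuv)).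
  - apply relator_wequiv_nil, rel_inv; assumption.
Qed.

Lemma gen_trivial_triangle u v w :
  Mtriangle G u v w -> gen_trivial G v w -> gen_trivial G w u -> gen_trivial G u v.
Proof.
  intros uvw Tvw Twu. unfold gen_trivial in *.
  eapply rst_trans.
  { exact (wequiv_app [((u, v), true)] [] _ _ (rst_sym _ _ _ _ Twu)). }
  eapply rst_trans.
  { exact (wequiv_app [((u, v), true)] [((w, u), true)] _ _ (rst_sym _ _ _ _ Tvw)). }
  apply relator_wequiv_nil, rel_tri; assumption.
Qed.

Definition star_trivial c : Prop := forall z, Medge G c z -> gen_trivial G c z.

Lemma star_trivial_one : star_trivial gone.
Proof. intros z Hz. apply relator_wequiv_nil, rel_base; auto. Qed.

Lemma star_trivial_conj n a g :
  n_locally_simply_connected G n -> has_order G g n ->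
  star_trivial (gmul (gmul a g) (ginv a)).
Proof. intros lsc g_n z Hz. apply lsc; [assumption | apply has_order_conj; assumption]. Qed.

Lemma gen_trivial_in_lcoset H x c u v :
  subgroup G H -> proper G H -> in_lcoset G x H c -> star_trivial c ->
  in_lcoset G x H u -> in_lcoset G x H v -> Medge G u v -> gen_trivial G u v.
Proof.
  intros sH pH Hc star_c Hu Hv uv.
  assert (edge_c : forall w, in_lcoset G x H w -> c <> w -> gen_trivial G c w).
  { intros w Hw cw. apply star_c, (Medge_in_lcoset H x); assumption. }
  destruct (classic (c = u)) as [<- | cu]; [apply star_c; assumption |].
  destruct (classic (c = v)) as [<- | cv].
  - apply gen_trivial_sym, edge_c; auto. apply Medge_sym; assumption.
  - apply (gen_trivial_triangle u v c).
    + destruct uv as [u_v _]. repeat split; auto. exists H, x; auto.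
    + apply gen_trivial_sym, edge_c; auto.
      apply (Medge_in_lcoset H x); auto.
    + apply edge_c; assumption.
Qed.

Lemma lcoset_has_star_trivial n S H u :
  n_locally_simply_connected G n -> two_transitive G S -> n_regular G n S ->
  S H -> subgroup G H -> exists c, in_lcoset G u H c /\ star_trivial c.
Proof.
  intros lsc tS rS SH sH.
  destruct (classic (H u)) as [Hu | Hu].
  - exists gone. split; [| exact star_trivial_one].
    apply in_lcoset_sym; [assumption |].
    unfold in_lcoset. rewrite invg1, gmul1l. exact Hu.
  - destruct (rS H SH) as [g [g_n [x g_moves]]].
    destruct (lcoset_contains_conj H g x u sH (tS H SH) g_moves Hu) as [a Ha].
    exists (gmul (gmul a g) (ginv a)).
    split; [assumption | apply (star_trivial_conj n); assumption].
Qed.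

End Group.

Theorem mainTheorem13 (G : group) (n : nat) :
  ~ cyclic G ->
  (exists g : G, has_order G g n) ->
  n_locally_simply_connected G n ->
  (exists S : (G -> Prop) -> Prop, cover G S /\ two_transitive G S /\ n_regular G n S) ->
  M_simply_connected G.
Proof.
  intros _ _ lsc [S [covS [tS rS]]].
  split.
  - intros u v. apply rt_trans with gone.
    + destruct (classic (u = gone)) as [-> | u1]; [apply rt_refl |].
      apply rt_step, Medge_sym, (Medge_one G S); assumption.
    + destruct (classic (v = gone)) as [-> | v1]; [apply rt_refl |].
      apply rt_step, (Medge_one G S); assumption.
  - intros u v uv.
    destruct covS as [S_sub S_cov].
    destruct (S_cov (gmul (ginv u) v)) as [H [SH Hv]].
    destruct (S_sub H SH) as [sH [pH _]].
    destruct (lcoset_has_star_trivial G n S H u lsc tS rS SH sH) as [c [Hc star_c]].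
    apply (gen_trivial_in_lcoset G H u c); auto.
    apply in_lcoset_refl; assumption.
Qed.
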